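(* Fix $\alpha\in(0,1)$. In the one-sided weakly dependent Gaussian testing model described in the context, suppose $n_1\to\infty$ and $n_1/n\to p_1\in(0,1]$ as $n\to\infty$, and let $\mu_{n_1}=\max\{\mu_i: i\in\mathcal I_1\}$. If $\lim_{n_1\to\infty}\frac{\sqrt{2\log n_1}}{\mu_{n_1}}$ exists and is strictly less than $1$, then for both the adjusted Bonferroni procedure and the Sidak procedure, $\lim_{n\to\infty}AnyPwr=1$.
   Context: $\Phi$ denotes the standard normal distribution function. Let $(\rho_{ij})_{i,j\ge1}$ be a symmetric array with $\rho_{ii}=1$ and $\rho_{ij}\in(-1,1)$ for $i\ne j$, such that for each $n$ the matrix $\Sigma_n=(\rho_{ij})_{1\le i,j\le n}$ is a valid correlation matrix. Put $\rho_m=\sup_{i\ge1}|\rho_{i,\,i+m}|$ and assume the weak dependence condition: $\gamma:=\sup_{m\ge 1}\rho_m<1$ and $\rho_m=o(1/\log m)$ as $m\to\infty$. For each $n$ one observes $(X_1,\dots,X_n)$, jointly Gaussian with $\mathbb{E}X_i=\mu_i$ (the means may depend on $n$), $\mathrm{Var}(X_i)=1$ and correlation matrix $\Sigma_n$. One tests $H_{0i}:\mu_i=0$ versus $H_{1i}:\mu_i>0$, $i=1,\dots,n$. Let $\mathcal I_1=\{i\le n:\mu_i>0\}$ be the set of false nulls (every $\mu_i$ is either $0$ or positive), $n_1=|\mathcal I_1|$. The adjusted Bonferroni procedure rejects $H_{0i}$ iff $X_i>c_{Bon}(n,\alpha):=\Phi^{-1}\bigl(1-\frac{-\log(1-\alpha)}{n}\bigr)$;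 the Sidak procedure rejects $H_{0i}$ iff $X_i>c_{Sid}(n,\alpha):=\Phi^{-1}\bigl((1-\alpha)^{1/n}\bigr)$. For a procedure with common cutoff $c$, $AnyPwr=\mathbb{P}\bigl(X_i>c\text{ for some }i\in\mathcal I_1\bigr)$, the probability of at least one true rejection. *)

From HB Require Import structures.
From mathcomp Require Import all_boot all_order all_algebra.
From mathcomp Require Import all_classical all_reals all_analysis.
Set Implicit Arguments. Unset Strict Implicit. Unset Printing Implicit Defensive.
Import Order.TTheory GRing.Theory Num.Theory.
Import numFieldNormedType.Exports.
Local Open Scope classical_set_scope.
Local Open Scope ring_scope.

Section Defs.
Context {R : realType}.

Definition gauss_law (m v : R) : set R -> \bar R :=
  if v == 0 then \d_m else normal_prob m (Num.sqrt v).

Definition Phi (x : R) : R := fine (normal_prob 0 1 `]-oo, x]).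

Definition Phi_inv (q : R) : R := sup [set x : R | Phi x <= q].

Definition c_Bon (n : nat) (alpha : R) : R :=
  Phi_inv (1 - (- ln (1 - alpha)) / n%:R).
Definition c_Sid (n : nat) (alpha : R) : R :=
  Phi_inv ((1 - alpha) `^ (n%:R)^-1).

Definition correlation_array (rho : nat -> nat -> R) : Prop :=
  [/\ forall i j, rho i j = rho j i,
      forall i, rho i i = 1,
      forall i j, i <> j -> -1 < rho i j < 1 &
      forall (n : nat) (a : 'I_n -> R),
        0 <= \sum_(i < n) \sum_(j < n) a i * a j * rho i j].

Definition rho_lag (rho : nat -> nat -> R) (m : nat) : R :=
  sup [set `|rho i (i + m)%N| | i in [set: nat]].

Definition weakly_dependent (rho : nat -> nat -> R) : Prop :=
  sup [set rho_lag rho m | m in [set m : nat | (1 <= m)%N]] < 1 /\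
  (fun m : nat => rho_lag rho m * ln m%:R) @ \oo --> (0 : R).

(** (X_i)_{i<n} is jointly Gaussian with means mu, unit variances and
    correlation (rho_ij): every linear combination sum_i a_i X_i is
    Gaussian with mean sum_i a_i mu_i and variance sum_{i,j} a_i a_j rho_ij. *)
Definition jointly_gaussian d (T : measurableType d) (P : probability T R)
    (n : nat) (X : 'I_n -> {RV P >-> R}) (mu : 'I_n -> R)
    (rho : nat -> nat -> R) : Prop :=
  forall (a : 'I_n -> R) (B : set R), measurable B ->
    P [set t | B (\sum_(i < n) a i * X i t)] =
    gauss_law (\sum_(i < n) a i * mu i)
              (\sum_(i < n) \sum_(j < n) a i * a j * rho i j) B.

Definition false_nulls (n : nat) (mu : 'I_n -> R) : {set 'I_n} :=
  [set i | 0 < mu i].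
Definition n1_of (n : nat) (mu : 'I_n -> R) : nat := #|false_nulls mu|.

Definition mu_max (n : nat) (mu : 'I_n -> R) : R :=
  \big[Order.max/0]_(i in false_nulls mu) mu i.

Definition AnyPwr d (T : measurableType d) (P : probability T R)
    (n : nat) (X : 'I_n -> {RV P >-> R}) (mu : 'I_n -> R) (c : R) : \bar R :=
  P [set t | exists i : 'I_n, i \in false_nulls mu /\ c < X i t].

End Defs.

From HB Require Import structures.
From mathcomp Require Import all_boot all_order all_algebra.
From mathcomp Require Import all_classical all_reals all_analysis.
From mathcomp Require Import ring lra measurable_realfun.
Set Implicit Arguments. Unset Strict Implicit. Unset Printing Implicit Defensive.
Import Order.TTheory GRing.Theory Num.Theory.
Import numFieldNormedType.Exports.
Local Open Scope classical_set_scope.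
Local Open Scope ring_scope.

(* Comparing the N(0,1) density with s times the N(0,s^2) density beyond z gives
   the tail bound s exp(-(1 - s^-2) z^2 / 2) for every s >= 1.  Both procedures
   use a level q_n with 1 - q_n >= t / n for a fixed t > 0, so their cutoff
   Phi^-1(q_n) is at most about sqrt(2 log n / (1 - s^-2)).  Eventually
   sqrt(2 log n_1) < b mu_{n_1} for some b < 1, and log n = log n_1 + O(1);
   choosing 1 - s^-2 = (1 + b^2) / 2 therefore puts the cutoff below
   mu_{n_1} - Y for every fixed Y, and the coordinate attaining mu_{n_1} exceeds
   it with probability at least 1 - s exp(-(1 - s^-2) Y^2 / 2). *)

Section GaussianTail.
Context {R : realType}.
Implicit Types m s x y z q : R.

Definition gauss_tail_bound s y : R := s * expR (- (1 - s^-2) * y ^+ 2 / 2).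

Lemma gauss_tail_bound_ge0 s y : 0 <= s -> 0 <= gauss_tail_bound s y.
Proof. by move=> s0; rewrite mulr_ge0 ?expR_ge0. Qed.

Lemma normal_peak1E s : 0 < s -> normal_peak 1 = s * normal_peak s.
Proof.
move=> s0; rewrite /normal_peak expr1n mul1r -mulrnAr sqrtrM ?sqr_ge0 //.
by rewrite sqrtr_sqr gtr0_norm // invfM mulrA divff ?mul1r ?gt_eqF.
Qed.

Lemma normal_pdf1_le_scaled m s y x : 1 <= s -> 0 <= y -> y <= `|x - m| ->
  normal_pdf m 1 x <= gauss_tail_bound s y * normal_pdf m s x.
Proof.
move=> s1 y0 yx; have s0 : 0 < s by lra.
rewrite /normal_pdf oner_eq0 gt_eqF // (normal_peak1E s0) /gauss_tail_bound.
rewrite -[s * normal_peak s * _]mulrA -[s * expR _ * _]mulrA.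
rewrite ler_wpM2l ?(ltW s0) // mulrCA ler_wpM2l ?normal_peak_ge0 //.
rewrite /normal_fun -expRD ler_expR expr1n -mulr_natr invfM.
have yx2 : y ^+ 2 <= (x - m) ^+ 2.
  by rewrite -[(x - m) ^+ 2]real_normK ?num_real //; nra.
have w : 0 <= (1 - s^-2) * ((x - m) ^+ 2 - y ^+ 2).
  by rewrite mulr_ge0 ?subr_ge0 // invf_le1 ?exprn_gt0 // expr_ge1 // ltW.
nra.
Qed.

Lemma normal_prob_outside_le m s y : 1 <= s -> 0 <= y ->
  (normal_prob m 1 (~` `](m - y)%R, (m + y)%R[) <= (gauss_tail_bound s y)%:E)%E.
Proof.
move=> s1 y0; have s0 : 0 < s by lra.
pose I : set R := ~` `]m - y, m + y[.
have mI : measurable I by apply: measurableC; exact: measurable_itv.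
apply: (@le_trans _ _ (\int[lebesgue_measure]_(x in I)
    ((gauss_tail_bound s y * normal_pdf m s x)%:E))%E).
  apply: ge0_le_integral => //.
  - by move=> x _; rewrite lee_fin normal_pdf_ge0.
  - apply/measurable_EFinP; exact: measurable_funTS (measurable_normal_pdf m 1).
  - apply/measurable_EFinP; apply: measurable_funM => //.
    exact: measurable_funTS (measurable_normal_pdf m s).
  move=> x /= xI; rewrite lee_fin normal_pdf1_le_scaled //.
  by rewrite leNgt ltr_distl; apply: contra_notN xI; rewrite in_itv.
under eq_integral do rewrite EFinM.
rewrite ge0_integralZl_EFin ?gauss_tail_bound_ge0 ?(ltW s0) //; last 2 first.
- by move=> x _; rewrite lee_fin normal_pdf_ge0.
- by apply/measurable_funTS/measurable_EFinP; exact: measurable_normal_pdf.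
rewrite -[leRHS]mule1 lee_wpmul2l ?lee_fin ?gauss_tail_bound_ge0 ?(ltW s0) //.
exact: (probability_le1 (normal_prob m s) mI).
Qed.

Lemma normal_prob_ge_tail m s y (S : set R) : 1 <= s -> 0 <= y ->
  measurable S -> `]m - y, m + y[ `<=` S ->
  ((1 - gauss_tail_bound s y)%:E <= normal_prob m 1 S)%E.
Proof.
move=> s1 y0 mS yS.
have mI : measurable (`]m - y, m + y[%classic : set R) by exact: measurable_itv.
apply: (@le_trans _ _ (normal_prob m 1 `]m - y, m + y[)).
  2: by apply: le_measure; rewrite ?inE.
rewrite -[X in (_ <= normal_prob m 1 X)%E]setCK probability_setC ?EFinB.
  by rewrite leeB // normal_prob_outside_le.
exact: measurableC.
Qed.

Lemma Phi_ge_tail s z x : 1 <= s -> 0 <= z -> z <= x ->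
  1 - gauss_tail_bound s z <= Phi x.
Proof.
move=> s1 z0 zx.
have mx : measurable (`]-oo, x] : set R) by exact: measurable_itv.
have fin : normal_prob 0 1 `]-oo, x] \is a fin_num.
  rewrite ge0_fin_numE ?measure_ge0 //.
  by rewrite (le_lt_trans (probability_le1 (normal_prob 0 1) mx)) ?ltry.
rewrite /Phi -lee_fin fineK // normal_prob_ge_tail //.
by move=> u; rewrite /= !in_itv /= add0r => /andP[_ uz]; lra.
Qed.

Lemma Phi_inv_le s z q : 1 <= s -> 0 <= z ->
  gauss_tail_bound s z < 1 - q -> Phi_inv q <= z.
Proof.
move=> s1 z0 tail_lt; rewrite /Phi_inv.
have [->|/set0P ne] := eqVneq [set x : R | Phi x <= q] set0; first by rewrite sup0.
apply: ge_sup => // x /= Phix; rewrite leNgt; apply/negP => zx.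
by have := Phi_ge_tail s1 z0 (ltW zx); lra.
Qed.

Lemma gauss_tail_bound_small s eps : 1 < s -> 0 < eps ->
  exists2 y, 0 <= y & gauss_tail_bound s y <= eps.
Proof.
move=> s1 eps0; pose th := 1 - s^-2.
have s0 : 0 < s by lra.
have th0 : 0 < th by rewrite /th subr_gt0 invf_lt1 ?exprn_gt0 //; nra.
pose y := 2 * s / (th * eps) + 1.
have y1 : 1 <= y by rewrite lerDr divr_ge0 ?mulr_ge0 ?ltW //; lra.
have ey : s <= eps * (th * y ^+ 2 / 2).
  have -> : eps * (th * y ^+ 2 / 2) = (s + th * eps / 2) * y.
    by rewrite /y; field; rewrite ?gt_eqF // mulr_gt0.
  have : 0 <= th * eps / 2 by rewrite divr_ge0 ?mulr_ge0 ?ltW.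
  nra.
exists y; first lra.
rewrite /gauss_tail_bound mulNr mulNr expRN -/th ler_pdivrMr ?expR_gt0 //.
have := expR_ge1Dx (th * y ^+ 2 / 2); have : 0 < eps * (th * y ^+ 2 / 2) by lra.
nra.
Qed.

End GaussianTail.

Lemma sum_delta_mul {R : realType} n (i : 'I_n) (F : 'I_n -> R) :
  \sum_(j < n) (j == i)%:R * F j = F i.
Proof.
under eq_bigr do rewrite mulr_natl mulrb.
by rewrite -big_mkcond big_pred1_eq.
Qed.

Section AnyPwr.
Context {R : realType} d (T : measurableType d) (P : probability T R).
Context (n : nat) (X : 'I_n -> {RV P >-> R}) (mu : 'I_n -> R).

Lemma jointly_gaussian_marginal rho (i : 'I_n) (B : set R) :
  jointly_gaussian X mu rho -> rho i i = 1 -> measurable B ->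
  P (X i @^-1` B) = normal_prob (mu i) 1 B.
Proof.
move=> JG rhoii mB; have := JG (fun j => (j == i)%:R) B mB.
under eq_set do rewrite sum_delta_mul.
rewrite sum_delta_mul.
under eq_bigr => k _ do under eq_bigr => j _ do rewrite -mulrA mulrCA.
under eq_bigr => k _ do rewrite sum_delta_mul.
by rewrite sum_delta_mul rhoii /gauss_law oner_eq0 sqrtr1.
Qed.

Lemma AnyPwr_setE c :
  [set t | exists i : 'I_n, i \in false_nulls mu /\ c < X i t] =
  \bigcup_(i in [set i | i \in false_nulls mu]) X i @^-1` `]c, +oo[.
Proof.
apply/seteqP; split => t /=.
  by move=> [i [iF ct]]; exists i => //=; rewrite in_itv /= ct.
by move=> [i iF]; rewrite /= in_itv /= andbT => ct; exists i.
Qed.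

Lemma measurable_AnyPwr_set c :
  measurable [set t | exists i : 'I_n, i \in false_nulls mu /\ c < X i t].
Proof.
rewrite AnyPwr_setE; apply: fin_bigcup_measurable; first exact: finite_finset.
by move=> i _; apply: measurable_funPTI; exact: measurable_itv.
Qed.

Lemma AnyPwr_le1 c : (AnyPwr X mu c <= 1)%E.
Proof. exact/probability_le1/measurable_AnyPwr_set. Qed.

Lemma AnyPwr_fin_num c : AnyPwr X mu c \is a fin_num.
Proof. by rewrite ge0_fin_numE ?measure_ge0 // (le_lt_trans (AnyPwr_le1 c)) ?ltry. Qed.

Lemma AnyPwr_ge_marginal (i : 'I_n) c : i \in false_nulls mu ->
  (P (X i @^-1` `]c, +oo[) <= AnyPwr X mu c)%E.
Proof.
move=> iF; apply: le_measure; rewrite ?inE.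
- by apply: measurable_funPTI; exact: measurable_itv.
- exact: measurable_AnyPwr_set.
by move=> t /=; rewrite in_itv /= andbT => ct; exists i.
Qed.

Lemma AnyPwr_ge_tail rho (i : 'I_n) c s y :
  jointly_gaussian X mu rho -> rho i i = 1 -> i \in false_nulls mu ->
  1 <= s -> 0 <= y -> c <= mu i - y ->
  ((1 - gauss_tail_bound s y)%:E <= AnyPwr X mu c)%E.
Proof.
move=> JG rhoii iF s1 y0 cy; apply: le_trans (AnyPwr_ge_marginal c iF).
rewrite (jointly_gaussian_marginal JG rhoii); last exact: measurable_itv.
apply: normal_prob_ge_tail => //.
by move=> u /=; rewrite !in_itv /= andbT => /andP[yu _]; lra.
Qed.

End AnyPwr.

Section RealInequalities.
Context {R : realType}.

Lemma gauss_tail_bound_lt (s z x : R) : 0 < s -> 0 < x ->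
  ln (s / x) < (1 - s^-2) * z ^+ 2 / 2 -> gauss_tail_bound s z < x.
Proof.
move=> s0 x0 lt_ln; rewrite /gauss_tail_bound mulNr mulNr expRN.
rewrite ltr_pdivrMr ?expR_gt0 // -ltr_pdivrMl // mulrC.
by rewrite -[s / x]lnK ?posrE ?divr_gt0 // ltr_expR.
Qed.

Lemma quadratic_margin (b M Y C : R) : b ^+ 2 <= 1 -> 1 <= M -> 0 <= Y -> 0 <= C ->
  4 * Y + 4 * C <= (1 - b ^+ 2) * M ->
  b ^+ 2 * M ^+ 2 / 2 + C <= (1 - (1 - b ^+ 2) / 2) * (M - Y) ^+ 2 / 2.
Proof.
move=> b1 M1 Y0 C0 hM.
have h1 : (4 * Y + 4 * C) * M <= (1 - b ^+ 2) * M * M by rewrite ler_wpM2r //; lra.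
have h2 : C <= C * M by rewrite ler_peMr.
have h3 : b ^+ 2 * (M * Y) <= M * Y by rewrite ler_piMl ?mulr_ge0 //; lra.
have h4 : 0 <= b ^+ 2 by rewrite sqr_ge0.
nra.
Qed.

Lemma one_sub_powR_ge (a r : R) : 0 < a <= 1 -> 0 <= r <= 1 ->
  a * - ln a * r <= 1 - a `^ r.
Proof.
move=> /andP[a0 a1] /andP[r0 r1].
have la : 0 <= - ln a by rewrite oppr_ge0 ln_le0.
rewrite /powR gt_eqF //; set u := r * ln a.
have u0 : 0 <= - u by rewrite /u -mulrN mulr_ge0.
have ua : a <= expR u.
  by rewrite -[a]lnK ?posrE // ler_expR /u; nra.
have -> : a * - ln a * r = a * - u by rewrite /u; ring.
have := expR_ge1Dx (- u); have := expRxMexpNx_1 u; have := expR_gt0 u.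
nra.
Qed.

End RealInequalities.

Lemma mu_max_attained {R : realType} n (mu : 'I_n -> R) :
  (0 < n1_of mu)%N -> exists2 i, i \in false_nulls mu & mu_max mu = mu i.
Proof.
move=> /card_gt0P [j jF]; rewrite /mu_max.
have [|i iF ->] := @eq_bigmax _ R _ 0 j (fun i => i \in false_nulls mu) mu jF.
  by move=> i; rewrite inE => /ltW.
by exists i.
Qed.

Unset Implicit Arguments.

Section Asymptotics.
Context {R : realType} (mu : forall n, 'I_n -> R) (p1 b : R).
Hypotheses (n1_cvgy : (fun n => (n1_of (mu n))%:R : R) @ \oo --> +oo)
  (p1_gt0 : 0 < p1)
  (n1_ratio_cvg : (fun n => (n1_of (mu n))%:R / n%:R : R) @ \oo --> p1)
  (b_gt0 : 0 < b) (b_lt1 : b < 1)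
  (ratio_lt : \forall n \near \oo,
     Num.sqrt (2 * ln (n1_of (mu n))%:R) / mu_max (mu n) < b).

Lemma n1_ge_near (A : R) : \forall n \near \oo, A <= (n1_of (mu n))%:R.
Proof. by move/cvgryPge : n1_cvgy; apply. Qed.

Lemma mu_max_gt0_near : \forall n \near \oo, 0 < mu_max (mu n).
Proof.
near=> n; have : (0 < n1_of (mu n))%N.
  by rewrite -(ltr0n R) (lt_le_trans ltr01) //; near: n; exact: n1_ge_near.
by move=> /mu_max_attained [i]; rewrite inE => iF ->.
Unshelve. all: by end_near.
Qed.

Lemma ln_n1_lt_near : \forall n \near \oo,
  2 * ln (n1_of (mu n))%:R < b ^+ 2 * mu_max (mu n) ^+ 2.
Proof.
near=> n; have M0 : 0 < mu_max (mu n) by near: n; exact: mu_max_gt0_near.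
have : Num.sqrt (2 * ln (n1_of (mu n))%:R) < b * mu_max (mu n).
  by rewrite -ltr_pdivrMr //; near: n.
have n11 : (1 : R) <= (n1_of (mu n))%:R by near: n; exact: n1_ge_near.
rewrite -[b * _]ger0_norm ?mulr_ge0 ?ltW // -sqrtr_sqr ltr_sqrt ?exprn_gt0 ?mulr_gt0 //.
by rewrite exprMn.
Unshelve. all: by end_near.
Qed.

Lemma mu_max_cvgy : (fun n => mu_max (mu n)) @ \oo --> +oo.
Proof.
apply/cvgryPge => A; near=> n.
have M0 : 0 < mu_max (mu n) by near: n; exact: mu_max_gt0_near.
have lnA : A ^+ 2 / 2 <= ln (n1_of (mu n))%:R.
  rewrite -ler_expR lnK; first by near: n; exact: n1_ge_near.
  by rewrite posrE (lt_le_trans (expR_gt0 (A ^+ 2 / 2))) //; near: n; exact: n1_ge_near.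
have : 2 * ln (n1_of (mu n))%:R < b ^+ 2 * mu_max (mu n) ^+ 2.
  by near: n; exact: ln_n1_lt_near.
have : b ^+ 2 <= 1 by rewrite expr_le1 ?ltW.
nra.
Unshelve. all: by end_near.
Qed.

Lemma ln_n_lt_near : \forall n \near \oo,
  ln n%:R < ln (n1_of (mu n))%:R + ln (2 / p1).
Proof.
have p1_half : p1 / 2 < p1 by have := p1_gt0; lra.
near=> n.
have n1_ge1 : (1 : R) <= (n1_of (mu n))%:R by near: n; exact: n1_ge_near.
have n_gt0 : (0 : R) < n%:R by rewrite ltr0n; near: n; exact: nbhs_infty_gt 0.
have : p1 / 2 < (n1_of (mu n))%:R / n%:R.
  by near: n; exact: cvgr_gt _ n1_ratio_cvg _ p1_half.
rewrite ltr_pdivlMr // => lt_n.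
have p10 := p1_gt0; have n1_gt0 : (0 : R) < (n1_of (mu n))%:R by lra.
have p1_inv : 0 < 2 / p1 by rewrite divr_gt0.
rewrite -lnM ?posrE // ltr_ln ?posrE ?mulr_gt0 ?invr_gt0 //.
by rewrite mulrA ltr_pdivlMr //; lra.
Unshelve. all: by end_near.
Qed.

Lemma cutoff_le_mu_max_near (s t Y : R) (q : nat -> R) :
  1 <= s -> s^-2 = (1 - b ^+ 2) / 2 -> 0 < t ->
  (forall n, (0 < n)%N -> t / n%:R <= 1 - q n) -> 0 <= Y ->
  \forall n \near \oo, Phi_inv (q n) <= mu_max (mu n) - Y.
Proof.
move=> s1 hs t0 hq Y0; have s0 : 0 < s by lra.
have b0 := b_gt0; have b1 := b_lt1.
have b2_lt1 : b ^+ 2 < 1 by rewrite expr_lt1 ?ltW.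
have b2_ge0 : 0 <= b ^+ 2 by rewrite sqr_ge0.
pose C := `|ln (s / t) + ln (2 / p1)|.
have C0 : 0 <= C := normr_ge0 _.
near=> n.
have : Num.max 1 ((4 * Y + 4 * C) / (1 - b ^+ 2)) <= mu_max (mu n).
  by near: n; move/cvgryPge : mu_max_cvgy; apply.
rewrite ge_max ler_pdivrMr ?subr_gt0 // mulrC => /andP[M1 hM].
have n_gt0 : (0 < n)%N by near: n; exact: nbhs_infty_gt 0.
have n_gt0R : (0 : R) < n%:R by rewrite ltr0n.
have hM1 : (1 - b ^+ 2) * mu_max (mu n) <= mu_max (mu n) by rewrite ler_piMl; lra.
apply: Phi_inv_le s1 _ _; first lra.
apply: lt_le_trans (hq n n_gt0); apply: gauss_tail_bound_lt; rewrite ?divr_gt0 //.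
have -> : s / (t / n%:R) = s / t * n%:R by field; rewrite ?gt_eqF.
rewrite lnM ?posrE ?divr_gt0 // hs.
apply: lt_le_trans (quadratic_margin (ltW b2_lt1) M1 Y0 C0 _); last lra.
have : ln n%:R < ln (n1_of (mu n))%:R + ln (2 / p1) by near: n; exact: ln_n_lt_near.
have : 2 * ln (n1_of (mu n))%:R < b ^+ 2 * mu_max (mu n) ^+ 2.
  by near: n; exact: ln_n1_lt_near.
have : ln (s / t) + ln (2 / p1) <= C by exact: ler_norm.
lra.
Unshelve. all: by end_near.
Qed.

Lemma AnyPwr_cvg1 (d : nat -> measure_display) (T : forall n, measurableType (d n))
    (P : forall n, probability (T n) R) (X : forall n, 'I_n -> {RV (P n) >-> R})
    (rho : nat -> nat -> R) (t : R) (q : nat -> R) :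
  (forall n, jointly_gaussian (X n) (mu n) rho) -> (forall i, rho i i = 1) ->
  0 < t -> (forall n, (0 < n)%N -> t / n%:R <= 1 - q n) ->
  (fun n => AnyPwr (X n) (mu n) (Phi_inv (q n))) @ \oo --> 1%E.
Proof.
move=> JG rho_diag t0 hq.
have b0 := b_gt0; have b1 := b_lt1.
have w0 : 0 < 1 - b ^+ 2 by rewrite subr_gt0 expr_lt1 ?ltW.
(* 1 - s^-2 = (1 + b^2) / 2 lies strictly between b^2 and 1. *)
pose s := Num.sqrt (2 / (1 - b ^+ 2)).
have s2 : s ^+ 2 = 2 / (1 - b ^+ 2) by rewrite sqr_sqrtr // divr_ge0 ?ltW.
have hs : s^-2 = (1 - b ^+ 2) / 2 by rewrite s2 invf_div.
have s1 : 1 < s.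
  have : 1 < s ^+ 2 by rewrite s2 ltr_pdivlMr //; nra.
  have := sqrtr_ge0 (2 / (1 - b ^+ 2)); rewrite -/s; nra.
apply: cvg_EFin; first by apply: nearW => n; exact: AnyPwr_fin_num.
apply/cvgrPdist_le => eps eps0.
have [Y Y0 tailY] := gauss_tail_bound_small s1 eps0.
near=> n.
have n1_gt0 : (0 < n1_of (mu n))%N.
  by rewrite -(ltr0n R) (lt_le_trans ltr01) //; near: n; exact: n1_ge_near.
have [i iF Mi] := mu_max_attained n1_gt0.
have cutoff : Phi_inv (q n) <= mu n i - Y.
  by rewrite -Mi; near: n; exact: cutoff_le_mu_max_near (ltW s1) hs t0 hq Y0.
have lb := AnyPwr_ge_tail (JG n) (rho_diag i) iF (ltW s1) Y0 cutoff.
have ub := AnyPwr_le1 (X n) (mu n) (Phi_inv (q n)).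
move: lb ub; rewrite -(fineK (AnyPwr_fin_num _ _ _)) !lee_fin => lb ub.
rewrite ger0_norm ?subr_ge0 //=; lra.
Unshelve. all: by end_near.
Qed.

End Asymptotics.

Theorem theorem4p1 (R : realType) (alpha : R) (rho : nat -> nat -> R)
    (d : nat -> measure_display) (T : forall n, measurableType (d n))
    (P : forall n, probability (T n) R)
    (mu : forall n, 'I_n -> R)
    (X : forall n, 'I_n -> {RV (P n) >-> R}) (p1 : R) :
  0 < alpha < 1 ->
  correlation_array rho ->
  weakly_dependent rho ->
  (forall n (i : 'I_n), 0 <= mu n i) ->
  (forall n, jointly_gaussian (X n) (mu n) rho) ->
  (fun n => (n1_of (mu n))%:R : R) @ \oo --> +oo ->
  0 < p1 <= 1 ->
  (fun n => (n1_of (mu n))%:R / n%:R : R) @ \oo --> p1 ->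
  (exists2 L : R, L < 1 &
     (fun n => Num.sqrt (2 * ln (n1_of (mu n))%:R) / mu_max (mu n))
       @ \oo --> L) ->
  (fun n => AnyPwr (X n) (mu n) (c_Bon n alpha)) @ \oo --> 1%E /\
  (fun n => AnyPwr (X n) (mu n) (c_Sid n alpha)) @ \oo --> 1%E.
Proof.
move=> /andP[a0 a1] [_ rho_diag _ _] _ _ JG n1_cvgy /andP[p1_gt0 _] n1_ratio_cvg.
move=> [L L_lt1 ratio_cvg].
pose b := (Num.max L 0 + 1) / 2.
have [b_gt0 b_lt1 L_lt_b] : [/\ 0 < b, b < 1 & L < b].
  have : L <= Num.max L 0 by rewrite le_max lexx.
  have : 0 <= Num.max L 0 by rewrite le_max lexx orbT.
  have : Num.max L 0 < 1 by rewrite gt_max L_lt1 ltr01.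
  by rewrite /b; split; lra.
have ratio_lt : \forall n \near \oo,
    Num.sqrt (2 * ln (n1_of (mu n))%:R) / mu_max (mu n) < b.
  exact: cvgr_lt ratio_cvg _ L_lt_b.
have AnyPwr_cvg := AnyPwr_cvg1 mu p1 b n1_cvgy p1_gt0 n1_ratio_cvg b_gt0 b_lt1
  ratio_lt d T P X rho _ _ JG rho_diag.
have ln_gt0 : 0 < - ln (1 - alpha) by rewrite oppr_gt0 ln_lt0 //; apply/andP; lra.
split; first by apply: AnyPwr_cvg ln_gt0 _ => n _; lra.
apply: (AnyPwr_cvg ((1 - alpha) * - ln (1 - alpha))).
  by rewrite mulr_gt0 // subr_gt0.
move=> n n_gt0; apply: one_sub_powR_ge; apply/andP; split; try lra.
- by rewrite invr_ge0.
- by rewrite invf_le1 ?ler1n ?ltr0n.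
Qed.
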